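(* Let $\lambda>0$ and integers $p\ge0$, $0\le k\le p+1$. Then $\{h^\lambda_{j,p}:0\le j<k\}$ is a basis of $V_{k,\lambda}(p)$, where $h^\lambda_{j,p}(z,w)=\sum_{j\le i\le p}\binom ij\binom{p-i+\lambda-1}{p-i}z^iw^{p-i}$.
   Context: For $\lambda>0$, $\mathcal H^{(\lambda)}$ is the Hilbert space of holomorphic functions on $\mathbb D$ with reproducing kernel $(1-z\bar w)^{-\lambda}$, and $H^2$ the Hardy space. $\mathcal H^{(\lambda)}\otimes H^2$ is identified with a Hilbert space of holomorphic functions on $\mathbb D^2$ via $f\otimes g\mapsto((z,w)\mapsto g(z)f(w))$. $Hom(p)$ is the space of homogeneous polynomials of degree $p$ in $z,w$, so that $\mathcal H^{(\lambda)}\otimes H^2=\bigoplus_{p\ge0}Hom(p)$ orthogonally. Let $\triangle=\{(z,z):z\in\mathbb D\}$. $V_{k,\lambda}$ is the orthogonal complement in $\mathcal H^{(\lambda)}\otimes H^2$ of the set of all $h\in\mathcal H^{(\lambda)}\otimes H^2$ vanishing to order $\ge k$ on $\triangle$ (i.e. all partial derivatives of $h$ of order $<k$ vanish on $\triangle$), and $V_{k,\lambda}(p)=Hom(p)\cap V_{k,\lambda}$. *)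

From HB Require Import structures.
From mathcomp Require Import all_boot all_order all_algebra.
From mathcomp Require Import complex.
From mathcomp Require Import reals.
Set Implicit Arguments. Unset Strict Implicit. Unset Printing Implicit Defensive.
Import Order.TTheory GRing.Theory Num.Theory.
Local Open Scope ring_scope.

Section Defs.
Variable R : realType.
Local Notation C := R[i].

Definition gbinom (x : R) (m : nat) : R :=
  (\prod_(l < m) (x - l%:R)) / (m`!)%:R.

(* ||w^m||^2 in H^(lam): the kernel (1 - z conj w)^(-lam)
   = sum_m binom(m+lam-1, m) (z conj w)^m, so ||w^m||^2 = 1/binom(m+lam-1,m). *)
Definition wnorm2 (lam : R) (m : nat) : R :=
  (gbinom (m%:R + lam - 1) m)^-1.

(* A holomorphic function on D^2 given by its Taylor coefficients:
   c i j = coefficient of z^i w^j  (z: the H^2 variable, w: the H^(lam) one).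
   ||z^i w^j||^2 = ||z^i||^2_{H^2} ||w^j||^2_{H^(lam)} = wnorm2 lam j. *)
Definition coefs := nat -> nat -> C.

(* membership in H^(lam) (x) H^2 : sum_{i,j} |c i j|^2 ||z^i w^j||^2 < oo
   (nonnegative double series: bounded partial sums). *)
Definition in_space (lam : R) (c : coefs) : Prop :=
  exists M : R, forall N : nat,
    \sum_(i < N) \sum_(j < N) `|c i j| ^+ 2 * real_complex R (wnorm2 lam j) <= real_complex R M.

(* h vanishes to order >= k on the diagonal: for every a + b < k,
   (d/dz)^a (d/dw)^b h (z,z) = 0 on D, i.e. every Taylor coefficient of
   z |-> sum_{i,j} c_{i+a,j+b} (i+a)^_a (j+b)^_b z^(i+j) vanishes. *)
Definition vanishes_on_diag (k : nat) (c : coefs) : Prop :=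
  forall a b : nat, (a + b < k)%N -> forall n : nat,
    \sum_(i < n.+1)
       c (i + a)%N (n - i + b)%N * ((i + a) ^_ a)%:R * ((n - i + b) ^_ b)%:R
    = 0.

(* An element of Hom(p): q 0 i is the coefficient of z^i w^(p-i). *)
Definition homp (p : nat) := 'rV[C]_(p.+1).

(* <q, h> for q in Hom(p) and h in the space (only the degree-p part of h
   contributes, so the series is this finite sum). *)
Definition inner_hom (lam : R) (p : nat) (q : homp p) (h : coefs) : C :=
  \sum_(i < p.+1) q 0 i * (h i (p - i)%N)^* * real_complex R (wnorm2 lam (p - i)).

(* q in V_{k,lam}(p) = Hom(p) /\ (orthogonal complement of the functions
   vanishing to order >= k on the diagonal). *)
Definition in_Vkp (lam : R) (k p : nat) (q : homp p) : Prop :=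
  forall h : coefs, in_space lam h -> vanishes_on_diag k h -> inner_hom lam q h = 0.

Definition hjp (lam : R) (j p : nat) : homp p :=
  \row_(i < p.+1)
    real_complex R (('C(i, j))%:R * gbinom ((p - i)%:R + lam - 1) (p - i)).

End Defs.

From HB Require Import structures.
From mathcomp Require Import all_boot all_order all_algebra.
From mathcomp Require Import complex reals.
From mathcomp Require Import zify ring.
Import Order.TTheory GRing.Theory Num.Theory.
Local Open Scope ring_scope.
Set Implicit Arguments. Unset Strict Implicit. Unset Printing Implicit Defensive.

(* Pairing h_{j,p} with a function h of the space gives the conjugate of
   sum_i C(i,j) h_{i,p-i}, the z^(p-j) coefficient of (1/j!) (d/dz)^j h (z,z);
   so h_{j,p} lies in V_{k,lam}(p) for j < k.  In the weighted coordinates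
   q_i ||z^i w^(p-i)||^2 of Hom(p), h_{j,p} becomes (C(i,j))_i, and the
   unitriangularity of the binomial matrix gives both the independence of the
   h_{j,p} and, for q in V_{k,lam}(p), a combination of them with the same
   first k coordinates.  The difference r is then killed by the
   test functions z^m w^(p-m-k) (w-z)^k, which vanish to order k on the diagonal
   (their diagonal derivatives of order a+b < k are k-th finite differences of
   polynomials of degree a+b): pairing r with them writes each coordinate of r
   as a combination of the previous ones. *)

Section BinomialMatrix.
Variable F : comUnitRingType.

Definition binom_mx n : 'M[F]_n := \matrix_(i, j) ('C(i, j))%:R.

Lemma binom_mx_unit n : binom_mx n \in unitmx.
Proof.
rewrite unitmxE det_trig; last by apply/is_trig_mxP => i j ij; rewrite mxE bin_small.
by rewrite big1 ?unitr1 // => i _; rewrite mxE binn.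
Qed.

Lemma binom_mx_mulE n (a : 'I_n -> F) (x : 'I_n) :
  (binom_mx n *m \col_j a j) x 0 = \sum_j a j * ('C(x, j))%:R.
Proof. by rewrite mxE; apply: eq_bigr => j _; rewrite !mxE mulrC. Qed.

Lemma binom_sum_eq0 n (a : 'I_n -> F) :
  (forall x : 'I_n, \sum_j a j * ('C(x, j))%:R = 0) -> forall j, a j = 0.
Proof.
move=> a_eq0 j; have u0 : binom_mx n *m \col_j a j = 0.
  by apply/colP => x; rewrite binom_mx_mulE a_eq0 mxE.
have := congr1 (fun u : 'cV_n => u j 0) (mulKmx (binom_mx_unit n) (\col_j a j)).
by rewrite u0 mulmx0 !mxE.
Qed.

Lemma binom_sum_onto n (e : 'I_n -> F) :
  exists a : 'I_n -> F, forall x : 'I_n, \sum_j a j * ('C(x, j))%:R = e x.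
Proof.
set u := invmx (binom_mx n) *m \col_x e x.
exists (fun j => u j 0) => x; rewrite -binom_mx_mulE.
have -> : \col_j u j 0 = u by apply/colP => j; rewrite mxE.
by rewrite mulKVmx ?binom_mx_unit // mxE.
Qed.

End BinomialMatrix.

Section FiniteDifferences.
Variable F : idomainType.

(* [(-1)^k] times the k-th forward difference of [f] at [m]. *)
Definition alt_binom_sum k (f : nat -> F) m : F :=
  \sum_(0 <= t < k.+1) (-1) ^+ t * ('C(k, t))%:R * f (t + m)%N.

Lemma alt_binom_sumS k f m :
  alt_binom_sum k.+1 f m = alt_binom_sum k f m - alt_binom_sum k f m.+1.
Proof.
rewrite /alt_binom_sum big_nat_recl // [in RHS]big_nat_recl // expr0 bin0 mul1r.
under eq_bigr => t _ do rewrite binS natrD mulrDr mulrDl.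
rewrite big_split addrA -sumrN; congr (_ + _).
  by rewrite big_nat_recr //= bin_small // mulr0 mul0r addr0 bin0 mulr1.
by apply: eq_bigr => t _; rewrite exprS mulN1r !mulNr addSnnS.
Qed.

Lemma size_sub_comp_XaddC (P : {poly F}) n :
  (size P <= n.+1)%N -> (size (P - (P \Po ('X + 1%:P)))%R <= n)%N.
Proof.
move=> sizeP; apply/leq_sizeP => j nj; rewrite coefB.
have size_comp : size (P \Po ('X + 1%:P)) = size P.
  by rewrite size_comp_poly2 // size_XaddC.
have [Pj | Pj] := leqP (size P) j; first by rewrite !nth_default ?subr0 ?size_comp.
have -> : j = (size P).-1 by lia.
have := lead_coef_comp P (q := 'X + 1%:P).
rewrite size_XaddC lead_coefXaddC expr1n mulr1 => /(_ isT).
by rewrite !lead_coefE size_comp => ->; rewrite subrr.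
Qed.

Lemma alt_binom_sum_poly k (P : {poly F}) m :
  (size P <= k)%N -> alt_binom_sum k (fun x => P.[x%:R]) m = 0.
Proof.
elim: k P m => [|k IHk] P m sizeP.
  move: sizeP; rewrite leqn0 size_poly_eq0 => /eqP ->.
  by rewrite /alt_binom_sum big_nat1 horner0 mulr0.
rewrite alt_binom_sumS -(IHk _ m (size_sub_comp_XaddC sizeP)).
rewrite /alt_binom_sum -sumrB; apply: eq_bigr => t _.
by rewrite hornerD hornerN horner_comp !hornerE addnS -natr1 mulrBr.
Qed.

Definition falling_poly a : {poly F} := \prod_(0 <= l < a) ('X - (l%:R)%:P).

Lemma size_falling_poly a : size (falling_poly a) = a.+1.
Proof. by rewrite size_prod_XsubC size_iota subn0. Qed.

Lemma horner_falling_poly a x : (falling_poly a).[x%:R] = (x ^_ a)%:R.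
Proof.
elim: a => [|a IHa]; first by rewrite /falling_poly big_nil hornerE.
rewrite /falling_poly big_nat_recr //= hornerM -/(falling_poly a) IHa ffactnSr natrM.
have [ax | xa] := leqP a x; first by rewrite !hornerE natrB.
by rewrite ffact_small // !mul0r.
Qed.

Definition ffact_poly a b p : {poly F} :=
  falling_poly a * (falling_poly b \Po (p%:R%:P - 'X)).

Lemma size_ffact_poly a b p : (size (ffact_poly a b p) <= (a + b).+1)%N.
Proof.
have size_lin : size (p%:R%:P - 'X : {poly F}) = 2 by rewrite -opprB size_polyN size_XsubC.
apply: leq_trans (size_polyMleq _ _) _; rewrite size_falling_poly addSn /=.
apply: leq_trans (leq_add (leqnn _) (size_comp_poly_leq _ _)) _.
by rewrite size_falling_poly size_lin muln1 addnS.
Qed.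

Lemma horner_ffact_poly a b p x : (x <= p)%N ->
  (ffact_poly a b p).[x%:R] = (x ^_ a)%:R * ((p - x) ^_ b)%:R.
Proof.
move=> xp; rewrite hornerM horner_comp horner_falling_poly !hornerE -natrB //.
by rewrite horner_falling_poly.
Qed.

End FiniteDifferences.

Lemma sum_diag_shift (V : pzSemiRingType) (h : nat -> nat -> V) a b n :
  \sum_(i < n.+1) h (i + a)%N (n - i + b)%N * ((i + a) ^_ a)%:R * ((n - i + b) ^_ b)%:R
  = \sum_(0 <= x < (n + a + b).+1)
      h x (n + a + b - x)%N * (x ^_ a)%:R * ((n + a + b - x) ^_ b)%:R.
Proof.
pose G x := h x (n + a + b - x)%N * (x ^_ a)%:R * ((n + a + b - x) ^_ b)%:R.
transitivity (\sum_(0 <= i < n.+1) G (i + a)%N).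
  rewrite big_mkord; apply: eq_bigr => i _; have i_le_n := ltn_ord i.
  by rewrite /G (_ : n - i + b = n + a + b - (i + a))%N //; lia.
rewrite [RHS](big_cat_nat (n := a)) //=; last lia.
rewrite [X in _ = X + _]big1_seq ?add0r; last first.
  move=> x /andP[_]; rewrite mem_index_iota => /andP[_ xa].
  by rewrite ffact_small // mulr0 mul0r.
rewrite [RHS](big_cat_nat (n := (n + a).+1)) //=; [|lia|lia].
rewrite [X in _ = _ + X]big1_seq ?addr0; last first.
  move=> x /andP[_]; rewrite mem_index_iota => /andP[nx x_lt].
  by rewrite (@ffact_small (n + a + b - x) b) ?mulr0 //; lia.
by rewrite (big_addn 0 _ a) (_ : (n + a).+1 - a = n.+1)%N //; lia.
Qed.

Lemma sum_ord_le_support (V : numDomainType) (f : nat -> V) B N :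
  (forall i, 0 <= f i) -> (forall i, (B < i)%N -> f i = 0) ->
  \sum_(i < N) f i <= \sum_(i < B.+1) f i.
Proof.
move=> f_ge0 f_supp.
rewrite (big_ord_widen (maxn N B.+1) _ (leq_maxl N B.+1)).
rewrite (big_ord_widen (maxn N B.+1) _ (leq_maxr N B.+1)).
rewrite big_mkcond [X in _ <= X]big_mkcond /=; apply: ler_sum => i _.
by case: ifP => _; case: ifP => // /negbT; rewrite -leqNgt => /f_supp ->.
Qed.

Section Main.
Variable R : realType.
Local Notation C := R[i].
Local Notation rc := (real_complex R).
Variable lam : R.
Hypothesis lam_gt0 : 0 < lam.

Definition kercoef (m : nat) : R := gbinom (m%:R + lam - 1) m.

Lemma kercoef_gt0 m : 0 < kercoef m.
Proof.
rewrite /kercoef /gbinom divr_gt0 ?ltr0n ?fact_gt0 //.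
apply: prodr_gt0 => l _; have l_lt : (l%:R + 1 : R) <= m%:R by rewrite natr1 ler_nat.
have -> : m%:R + lam - 1 - l%:R = m%:R - (l%:R + 1) + lam by ring.
by rewrite ltr_wpDl // subr_ge0.
Qed.

Lemma kercoef_wnorm2 m : rc (kercoef m) * rc (wnorm2 lam m) = 1.
Proof. by rewrite -rmorphM /= mulfV ?rmorph1 // gt_eqF // kercoef_gt0. Qed.

Lemma wnorm2_ge0 m : 0 <= wnorm2 lam m.
Proof. by rewrite invr_ge0 ltW // kercoef_gt0. Qed.

Lemma wnorm2_neq0 m : rc (wnorm2 lam m) != 0.
Proof. by apply: contra_eq_neq (kercoef_wnorm2 m) => ->; rewrite mulr0 eq_sym oner_neq0. Qed.

Lemma finite_support_in_space (c : coefs R) B :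
  (forall x y, (B < x)%N || (B < y)%N -> c x y = 0) -> in_space lam c.
Proof.
move=> c_supp; pose T i j := `|c i j| ^+ 2 * rc (wnorm2 lam j).
have T_ge0 i j : 0 <= T i j by rewrite mulr_ge0 ?exprn_ge0 ?normr_ge0 // ler0c wnorm2_ge0.
have T_supp i j : (B < i)%N || (B < j)%N -> T i j = 0.
  by move=> /c_supp c0; rewrite /T c0 normr0 expr0n mul0r.
pose S := \sum_(i < B.+1) \sum_(j < B.+1) T i j.
have S_ge0 : 0 <= S by do 2![apply: sumr_ge0 => ? _].
have S_real : rc (complex.Re S) = S.
  by move: S_ge0; case: S => x y; rewrite lecE /= => /andP[/eqP -> _].
exists (complex.Re S) => N; rewrite S_real.
apply: le_trans (_ : \sum_(i < N) \sum_(j < B.+1) T i j <= _).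
  apply: ler_sum => i _; apply: sum_ord_le_support => // j Bj.
  by apply: T_supp; rewrite Bj orbT.
apply: (sum_ord_le_support (f := fun i => \sum_(j < B.+1) T i j)) => [i|i Bi].
  by apply: sumr_ge0.
by apply: big1 => j _; apply: T_supp; rewrite Bi.
Qed.

Variables p k : nat.
Hypothesis k_le : (k <= p.+1)%N.

Local Notation hs := [seq hjp lam j p | j <- iota 0 k].

Definition wcoord (q : homp R p) (x : nat) : C :=
  q 0 (inord x) * rc (wnorm2 lam (p - x)).

Lemma inner_homE q h :
  inner_hom lam q h = \sum_(0 <= x < p.+1) wcoord q x * (h x (p - x)%N)^*.
Proof. by rewrite big_mkord; apply: eq_bigr => i _; rewrite /wcoord inord_val mulrAC. Qed.

Lemma inner_homZD a (q1 q2 : homp R p) h :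
  inner_hom lam (a *: q1 + q2) h = a * inner_hom lam q1 h + inner_hom lam q2 h.
Proof.
by rewrite /inner_hom mulr_sumr -big_split; apply: eq_bigr => i _; rewrite !mxE /=; ring.
Qed.

Lemma in_VkpZD a (q1 q2 : homp R p) :
  in_Vkp lam k q1 -> in_Vkp lam k q2 -> in_Vkp lam k (a *: q1 + q2).
Proof. by move=> V1 V2 h h_space h_vanish; rewrite inner_homZD V1 // V2 // mulr0 addr0. Qed.

Lemma in_Vkp0 : in_Vkp lam k (0 : homp R p).
Proof. by move=> h _ _; rewrite /inner_hom big1 // => i _; rewrite mxE !mul0r. Qed.

Lemma in_Vkp_sum n (a : 'I_n -> C) (v : 'I_n -> homp R p) :
  (forall i, in_Vkp lam k (v i)) -> in_Vkp lam k (\sum_i a i *: v i).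
Proof.
move=> Vv; elim/big_ind: _ => [|q1 q2 V1 V2|i _]; first exact: in_Vkp0.
  by rewrite -[q1]scale1r; apply: in_VkpZD.
by rewrite -[_ *: _]addr0; apply: in_VkpZD => //; apply: in_Vkp0.
Qed.

Lemma wcoordB (q1 q2 : homp R p) x : wcoord (q1 - q2) x = wcoord q1 x - wcoord q2 x.
Proof. by rewrite /wcoord !mxE mulrBl. Qed.

Lemma wcoord_sum n (a : 'I_n -> C) (v : 'I_n -> homp R p) x :
  wcoord (\sum_j a j *: v j) x = \sum_j a j * wcoord (v j) x.
Proof.
by rewrite /wcoord summxE mulr_suml; apply: eq_bigr => j _; rewrite mxE mulrA.
Qed.

Lemma wcoord_hjp j x : (x <= p)%N -> wcoord (hjp lam j p) x = ('C(x, j))%:R.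
Proof.
move=> x_le; rewrite /wcoord mxE inordK // rmorphM rmorph_nat /=.
by rewrite -/(kercoef (p - x)) -mulrA kercoef_wnorm2 mulr1.
Qed.

Lemma wcoord_eq0 q : (forall x, (x <= p)%N -> wcoord q x = 0) -> q = 0.
Proof.
move=> q0; apply/rowP => i; rewrite mxE.
have /eqP := q0 i (ltnSE (ltn_ord i)).
by rewrite /wcoord inord_val mulf_eq0 (negbTE (wnorm2_neq0 _)) orbF => /eqP.
Qed.

Lemma nth_hjp_seq i : (i < k)%N -> hs`_i = hjp lam i p.
Proof. by move=> i_lt; rewrite (nth_map 0%N) ?size_iota // nth_iota. Qed.

Lemma size_hjp_seq : size hs = k.
Proof. by rewrite size_map size_iota. Qed.

Lemma vanishes_on_diag_binom_sum (h : coefs R) j : (j < k)%N -> vanishes_on_diag k h ->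
  \sum_(0 <= x < p.+1) ('C(x, j))%:R * h x (p - x)%N = 0.
Proof.
move=> j_lt vh; have := vh j 0%N; rewrite addn0 => /(_ j_lt (p - j)%N).
rewrite sum_diag_shift addn0 subnK; last lia.
move=> sum0; apply/(mulIf (_ : (j`!)%:R != 0 :> C)); first by rewrite pnatr_eq0 -lt0n fact_gt0.
rewrite mul0r -[RHS]sum0 mulr_suml; apply: eq_bigr => x _.
by rewrite ffactn0 mulr1 -bin_ffact natrM; ring.
Qed.

Lemma hjp_in_Vkp j : (j < k)%N -> in_Vkp lam k (hjp lam j p).
Proof.
move=> j_lt h _ vh; rewrite inner_homE.
have /(congr1 Num.conj) := vanishes_on_diag_binom_sum j_lt vh.
rewrite conjC0 rmorph_sum => conj_sum0; rewrite -[RHS]conj_sum0.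
apply: eq_big_nat => x /andP[_ x_lt]; rewrite wcoord_hjp //.
by rewrite rmorphM rmorph_nat.
Qed.

Definition test_coef (m x : nat) : C :=
  if (m <= x)%N then (-1) ^+ (x - m) * ('C(k, x - m))%:R else 0.

(* The Taylor coefficients of z^m w^(p-m-k) (w - z)^k. *)
Definition test_fun (m : nat) : coefs R :=
  fun x y => if (x + y == p)%N then test_coef m x else 0.

Lemma sum_test_coef m (G : nat -> C) : (m + k <= p)%N ->
  \sum_(0 <= x < p.+1) test_coef m x * G x = alt_binom_sum k G m.
Proof.
move=> mk_le; rewrite (big_cat_nat (n := m)) //=; last lia.
rewrite big1_seq ?add0r; last first.
  by move=> x /andP[_]; rewrite mem_index_iota /test_coef => /andP[_ /ltn_geF ->]; rewrite mul0r.
rewrite (big_addn 0 _ m) (big_cat_nat (n := k.+1)) //=; last lia.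
rewrite [X in _ + X]big1_seq ?addr0; last first.
  move=> t /andP[_]; rewrite mem_index_iota => /andP[kt _].
  by rewrite /test_coef leq_addl addnK bin_small ?mulr0 ?mul0r.
by apply: eq_big_nat => t _; rewrite /test_coef leq_addl addnK.
Qed.

Lemma test_fun_in_space m : in_space lam (test_fun m).
Proof.
apply: (@finite_support_in_space _ p) => x y xy_gt; rewrite /test_fun ifF //.
by apply/negbTE/eqP => xy_eq; move: xy_gt; lia.
Qed.

Lemma test_fun_vanishes m : (m + k <= p)%N -> vanishes_on_diag k (test_fun m).
Proof.
move=> mk_le a b ab_lt n.
have [deg_p | deg_p] := eqVneq (n + a + b)%N p; last first.
  rewrite big1 // => i _; have i_le := ltn_ord i.
  by rewrite /test_fun ifF ?mul0r //; apply/negbTE/eqP => deg; move: deg_p; lia.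
rewrite sum_diag_shift deg_p.
transitivity (\sum_(0 <= x < p.+1) test_coef m x * (ffact_poly C a b p).[x%:R]).
  apply: eq_big_nat => x /andP[_ x_lt]; rewrite horner_ffact_poly //.
  by rewrite /test_fun subnKC ?eqxx ?mulrA.
rewrite sum_test_coef // alt_binom_sum_poly //.
by apply: leq_trans (size_ffact_poly _ _ _ _) _.
Qed.

Lemma inner_hom_test_fun m q : (m + k <= p)%N ->
  inner_hom lam q (test_fun m) = alt_binom_sum k (wcoord q) m.
Proof.
move=> mk_le; rewrite inner_homE -sum_test_coef //.
apply: eq_big_nat => x /andP[_ x_lt]; rewrite /test_fun subnKC // eqxx mulrC.
rewrite /test_coef; case: ifP => _; last by rewrite conjC0.
by rewrite rmorphM rmorphXn rmorphN1 rmorph_nat.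
Qed.

(* Pairing [r] with [test_fun (x - k)] expresses [wcoord r x] through the
   coordinates below [x]. *)
Lemma in_Vkp_eq0 r : in_Vkp lam k r -> (forall x, (x < k)%N -> wcoord r x = 0) -> r = 0.
Proof.
move=> Vr r_low; apply: wcoord_eq0; elim/ltn_ind => x IHx x_le.
have [x_lt | k_le_x] := ltnP x k; first exact: r_low.
have mk_le : (x - k + k <= p)%N by lia.
have := Vr _ (test_fun_in_space (x - k)) (test_fun_vanishes mk_le).
rewrite inner_hom_test_fun // /alt_binom_sum big_nat_recr //= big1_seq ?add0r; last first.
  move=> t /andP[_]; rewrite mem_index_iota => /andP[_ t_lt].
  by rewrite IHx ?mulr0 //; lia.
by rewrite binn mulr1 subnKC // => /eqP; rewrite mulf_eq0 signr_eq0 => /eqP.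
Qed.

Lemma free_hjp_seq : free hs.
Proof.
apply/(@freeP _ _ _ (in_tuple hs)) => c sum_c0; apply: binom_sum_eq0 => x.
have x_le : (x <= p)%N by move: (ltn_ord x) size_hjp_seq; lia.
transitivity (wcoord (\sum_i c i *: (in_tuple hs)`_i) x); last first.
  by rewrite sum_c0 /wcoord mxE mul0r.
rewrite wcoord_sum; apply: eq_bigr => i _.
have i_lt : (i < k)%N by move: (ltn_ord i) size_hjp_seq; lia.
by rewrite /= nth_hjp_seq // wcoord_hjp.
Qed.

Lemma span_hjp_sub_Vkp q : q \in <<hs>>%VS -> in_Vkp lam k q.
Proof.
move=> /(coord_span (X := in_tuple hs)) ->; apply: in_Vkp_sum => i.
have i_lt : (i < k)%N by move: (ltn_ord i) size_hjp_seq; lia.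
by rewrite /= nth_hjp_seq //; apply: hjp_in_Vkp.
Qed.

Lemma Vkp_sub_span_hjp q : in_Vkp lam k q -> q \in <<hs>>%VS.
Proof.
move=> Vq; have [a a_solves] := binom_sum_onto (fun x : 'I_k => wcoord q x).
set r := \sum_(j < k) a j *: hjp lam j p.
have Vr : in_Vkp lam k r by apply: in_Vkp_sum => j; apply: hjp_in_Vkp.
have -> : q = r.
  apply/eqP; rewrite -subr_eq0; apply/eqP/in_Vkp_eq0.
    by rewrite addrC -scaleN1r; apply: in_VkpZD.
  move=> x x_lt; have x_le : (x <= p)%N by lia.
  rewrite wcoordB wcoord_sum; under eq_bigr => j _ do rewrite wcoord_hjp //.
  by rewrite (a_solves (Ordinal x_lt)) subrr.
apply: memv_suml => j _; apply/memvZ/memv_span/mapP.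
by exists (j : nat) => //; rewrite mem_iota add0n ltn_ord.
Qed.

End Main.

Unset Implicit Arguments. Set Strict Implicit.

Theorem lemma6p3 (R : realType) (lam : R) (p k : nat) :
  0 < lam -> (k <= p.+1)%N ->
  free [seq hjp lam j p | j <- iota 0 k] /\
  (forall q : homp R p,
     in_Vkp lam k q <-> q \in <<[seq hjp lam j p | j <- iota 0 k]>>%VS).
Proof.
move=> lam_gt0 k_le; split; first exact: free_hjp_seq.
by move=> q; split; [apply: Vkp_sub_span_hjp | apply: span_hjp_sub_Vkp].
Qed.
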